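(* For all real numbers $a,b,c,d>0$, \[ \frac{a}{(a^3+63bcd)^{1/3}} + \frac{b}{(63acd+b^3)^{1/3}} + \frac{c}{(63abd+c^3)^{1/3}} + \frac{d}{(63abc+d^3)^{1/3}} \geq 1. \] *)

From Stdlib Require Import Reals.
Open Scope R_scope.

(* Write a = x^16, b = y^16, c = z^16, d = w^16 and S = x^21 + y^21 + z^21 + w^21.
   Each summand is at least its share x^21 / S of 1: after clearing the cube root
   this is  x^63 + 63 x^15 (yzw)^16 <= S^3.  Expanding S^3 = (x^21 + T)^3 with
   T = y^21 + z^21 + w^21 >= 3 (yzw)^7 (AM-GM), it reduces to the one-variable
   inequality 63 q^5 <= 9 q^14 + 27 q^7 + 27, an instance of weighted AM-GM with
   weights 9, 27, 27. *)
From Stdlib Require Import Reals Lra Psatz.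
Open Scope R_scope.

Lemma weighted_amgm_9_27_27 (q : R) : 0 <= q -> 63 * q ^ 5 <= 9 * q ^ 14 + 27 * q ^ 7 + 27.
Proof.
intros hq.
assert (h1 := pow2_ge_0 (q - 1)). assert (h2 := pow2_ge_0 (q ^ 2 - 1)).
assert (h3 := pow2_ge_0 (q ^ 3 - 1)). assert (h5 := pow2_ge_0 (q ^ 5 - 1)).
assert (h7 := pow2_ge_0 (q ^ 7 - 1)).
nra.
Qed.

Lemma weighted_amgm_9_27_27_hom (p k : R) : 0 <= p -> 0 < k ->
  63 * p ^ 5 * k ^ 16 <= 9 * p ^ 14 * k ^ 7 + 27 * p ^ 7 * k ^ 14 + 27 * k ^ 21.
Proof.
intros hp hk.
assert (hk21 : 0 < k ^ 21) by (apply pow_lt; lra).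
assert (hq := weighted_amgm_9_27_27 (p / k) (Rle_mult_inv_pos _ _ hp hk)).
assert (hl : 63 * p ^ 5 * k ^ 16 = 63 * (p / k) ^ 5 * k ^ 21) by (field; lra).
assert (hr : 9 * p ^ 14 * k ^ 7 + 27 * p ^ 7 * k ^ 14 + 27 * k ^ 21
             = (9 * (p / k) ^ 14 + 27 * (p / k) ^ 7 + 27) * k ^ 21) by (field; lra).
rewrite hl, hr. apply Rmult_le_compat_r; lra.
Qed.

Lemma amgm3 (u v w : R) : 0 <= u -> 0 <= v -> 0 <= w ->
  3 * (u * v * w) <= u ^ 3 + v ^ 3 + w ^ 3.
Proof.
intros hu hv hw.
assert (hsq : 0 <= (u + v + w) * ((u - v) ^ 2 + (v - w) ^ 2 + (u - w) ^ 2)).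
{ apply Rmult_le_pos; [lra|].
  assert (h1 := pow2_ge_0 (u - v)). assert (h2 := pow2_ge_0 (v - w)).
  assert (h3 := pow2_ge_0 (u - w)). lra. }
assert (E : 2 * (u ^ 3 + v ^ 3 + w ^ 3 - 3 * (u * v * w))
            = (u + v + w) * ((u - v) ^ 2 + (v - w) ^ 2 + (u - w) ^ 2)) by ring.
lra.
Qed.

Lemma cube_binomial_lower_bound (x m T : R) : 0 <= x -> 0 < m -> 3 * m ^ 7 <= T ->
  x ^ 63 + 63 * x ^ 15 * m ^ 16 <= (x ^ 21 + T) ^ 3.
Proof.
intros hx hm hT.
assert (hA := weighted_amgm_9_27_27_hom (x ^ 3) m (pow_le _ 3 hx) hm).
assert (hm7 : 0 < m ^ 7) by (apply pow_lt; lra).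
assert (hx21 : 0 <= x ^ 21) by (apply pow_le; lra).
assert (h1 : 9 * x ^ 42 * m ^ 7 <= 3 * x ^ 42 * T).
{ assert (0 <= x ^ 42) by (apply pow_le; lra). nra. }
assert (h2 : 27 * x ^ 21 * m ^ 14 <= 3 * x ^ 21 * T ^ 2).
{ assert (9 * m ^ 14 <= T ^ 2) by nra. nra. }
assert (h3 : 27 * m ^ 21 <= T ^ 3).
{ replace (27 * m ^ 21) with ((3 * m ^ 7) ^ 3) by ring. apply pow_incr; lra. }
assert (E : (x ^ 21 + T) ^ 3 = x ^ 63 + 3 * x ^ 42 * T + 3 * x ^ 21 * T ^ 2 + T ^ 3) by ring.
replace ((x ^ 3) ^ 5) with (x ^ 15) in hA by ring.
replace ((x ^ 3) ^ 14) with (x ^ 42) in hA by ring.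
replace ((x ^ 3) ^ 7) with (x ^ 21) in hA by ring.
lra.
Qed.

Lemma power21_sum_cube_bound (x y z w : R) : 0 <= x -> 0 < y -> 0 < z -> 0 < w ->
  x ^ 63 + 63 * x ^ 15 * (y ^ 16 * z ^ 16 * w ^ 16) <= (x ^ 21 + y ^ 21 + z ^ 21 + w ^ 21) ^ 3.
Proof.
intros hx hy hz hw.
assert (hm : 0 < y * z * w) by (repeat apply Rmult_lt_0_compat; lra).
assert (hT : 3 * (y * z * w) ^ 7 <= y ^ 21 + z ^ 21 + w ^ 21).
{ replace ((y * z * w) ^ 7) with (y ^ 7 * z ^ 7 * w ^ 7) by ring.
  replace (y ^ 21 + z ^ 21 + w ^ 21) with ((y ^ 7) ^ 3 + (z ^ 7) ^ 3 + (w ^ 7) ^ 3) by ring.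
  apply amgm3; apply pow_le; lra. }
replace (y ^ 16 * z ^ 16 * w ^ 16) with ((y * z * w) ^ 16) by ring.
replace (x ^ 21 + y ^ 21 + z ^ 21 + w ^ 21) with (x ^ 21 + (y ^ 21 + z ^ 21 + w ^ 21)) by ring.
exact (cube_binomial_lower_bound x _ _ hx hm hT).
Qed.

Lemma Rpower_pow_inv (n : nat) (x : R) : (0 < n)%nat -> 0 < x ->
  Rpower (x ^ n) (1 / INR n) = x.
Proof.
intros hn hx.
assert (hn' : 0 < INR n) by (apply lt_0_INR; exact hn).
rewrite <- Rpower_pow by exact hx. rewrite Rpower_mult.
replace (INR n * (1 / INR n)) with 1 by (field; lra).
apply Rpower_1; exact hx.
Qed.

Lemma pow_Rpower_inv (n : nat) (a : R) : (0 < n)%nat -> 0 < a ->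
  Rpower a (1 / INR n) ^ n = a.
Proof.
intros hn ha.
assert (hn' : 0 < INR n) by (apply lt_0_INR; exact hn).
rewrite <- Rpower_pow by apply exp_pos. rewrite Rpower_mult.
replace (1 / INR n * INR n) with 1 by (field; lra).
apply Rpower_1; exact ha.
Qed.

Lemma Rpower_third_le (V K : R) : 0 < V -> 0 < K -> V <= K ^ 3 -> Rpower V (1 / 3) <= K.
Proof.
intros hV hK hVK.
rewrite <- (Rpower_pow_inv 3 K ltac:(lia) hK).
replace (INR 3) with 3 by (simpl; ring).
apply Rle_Rpower_l; lra.
Qed.

Lemma summand_lower_bound (x y z w S V : R) : 0 < x -> 0 < y -> 0 < z -> 0 < w ->
  S = x ^ 21 + y ^ 21 + z ^ 21 + w ^ 21 ->
  V = (x ^ 16) ^ 3 + 63 * y ^ 16 * z ^ 16 * w ^ 16 ->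
  x ^ 21 / S <= x ^ 16 / Rpower V (1 / 3).
Proof.
intros hx hy hz hw hS hV.
assert (hx5 : 0 < x ^ 5) by (apply pow_lt; lra).
assert (hS0 : 0 < S).
{ subst S. assert (0 < x ^ 21) by (apply pow_lt; lra).
  assert (0 < y ^ 21) by (apply pow_lt; lra). assert (0 < z ^ 21) by (apply pow_lt; lra).
  assert (0 < w ^ 21) by (apply pow_lt; lra). lra. }
assert (hV0 : 0 < V).
{ subst V. assert (0 < (x ^ 16) ^ 3) by (apply pow_lt, pow_lt; lra).
  assert (0 < y ^ 16 * z ^ 16 * w ^ 16)
    by (rewrite <- !Rpow_mult_distr; apply pow_lt; repeat apply Rmult_lt_0_compat; lra).
  lra. }
assert (hK : 0 < S / x ^ 5) by (apply Rdiv_lt_0_compat; lra).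
(* S / x^5 is chosen so that x^16 / (S / x^5) = x^21 / S. *)
assert (hroot : Rpower V (1 / 3) <= S / x ^ 5).
{ apply Rpower_third_le; [exact hV0 | exact hK |].
  assert (hx15 : 0 < x ^ 15) by (apply pow_lt; lra).
  assert (hcube := power21_sum_cube_bound x y z w (Rlt_le _ _ hx) hy hz hw).
  rewrite <- hS in hcube.
  replace ((S / x ^ 5) ^ 3) with (S ^ 3 / x ^ 15) by (field; lra).
  apply Rmult_le_reg_r with (x ^ 15); [exact hx15|].
  replace (S ^ 3 / x ^ 15 * x ^ 15) with (S ^ 3) by (field; lra).
  subst V. replace (((x ^ 16) ^ 3 + 63 * y ^ 16 * z ^ 16 * w ^ 16) * x ^ 15)
    with (x ^ 63 + 63 * x ^ 15 * (y ^ 16 * z ^ 16 * w ^ 16)) by ring.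
  exact hcube. }
assert (hR0 : 0 < Rpower V (1 / 3)) by apply exp_pos.
replace (x ^ 21 / S) with (x ^ 16 / (S / x ^ 5)) by (field; lra).
apply Rmult_le_compat_l; [apply pow_le; lra|].
apply Rinv_le_contravar; lra.
Qed.

Theorem mainTheorem19 (a b c d : R) (ha : 0 < a) (hb : 0 < b) (hc : 0 < c) (hd : 0 < d) :
  a / Rpower (a ^ 3 + 63 * b * c * d) (1 / 3)
  + b / Rpower (63 * a * c * d + b ^ 3) (1 / 3)
  + c / Rpower (63 * a * b * d + c ^ 3) (1 / 3)
  + d / Rpower (63 * a * b * c + d ^ 3) (1 / 3) >= 1.
Proof.
assert (h16 : (0 < 16)%nat) by lia.
rewrite <- (pow_Rpower_inv 16 a), <- (pow_Rpower_inv 16 b),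
        <- (pow_Rpower_inv 16 c), <- (pow_Rpower_inv 16 d) by assumption.
set (x := Rpower a (1 / INR 16)). set (y := Rpower b (1 / INR 16)).
set (z := Rpower c (1 / INR 16)). set (w := Rpower d (1 / INR 16)).
assert (hx : 0 < x) by apply exp_pos. assert (hy : 0 < y) by apply exp_pos.
assert (hz : 0 < z) by apply exp_pos. assert (hw : 0 < w) by apply exp_pos.
set (S := x ^ 21 + y ^ 21 + z ^ 21 + w ^ 21).
assert (hS : 0 < S).
{ unfold S. assert (0 < x ^ 21) by (apply pow_lt; lra). assert (0 < y ^ 21) by (apply pow_lt; lra).
  assert (0 < z ^ 21) by (apply pow_lt; lra). assert (0 < w ^ 21) by (apply pow_lt; lra). lra. }
assert (t1 := summand_lower_bound x y z w S _ hx hy hz hw eq_refl eq_refl).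
assert (t2 := summand_lower_bound y x z w S (63 * x ^ 16 * z ^ 16 * w ^ 16 + (y ^ 16) ^ 3)
                hy hx hz hw ltac:(unfold S; ring) ltac:(ring)).
assert (t3 := summand_lower_bound z x y w S (63 * x ^ 16 * y ^ 16 * w ^ 16 + (z ^ 16) ^ 3)
                hz hx hy hw ltac:(unfold S; ring) ltac:(ring)).
assert (t4 := summand_lower_bound w x y z S (63 * x ^ 16 * y ^ 16 * z ^ 16 + (w ^ 16) ^ 3)
                hw hx hy hz ltac:(unfold S; ring) ltac:(ring)).
assert (hsum : x ^ 21 / S + y ^ 21 / S + z ^ 21 / S + w ^ 21 / S = 1)
  by (transitivity (S / S); [unfold S at 5; field | field]; lra).
lra.
Qed.
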